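(* Let $\mathbf L$ be a locally compact non-discrete non-Archimedean field, $(X,\rho)$ an ultrametric space with completion $(\tilde X,\rho)$, $E\subset X$, and $P$ a uniform polyhedron over $\mathbf L$. Then each non-stretching mapping $f:E\to P$ has a non-stretching extension to $(\tilde X,\rho)$.
   Context: A map $f$ into $P\subset c_0(\mathbf L,A)$ is non-stretching if $\|f(x)-f(y)\|\le\rho(x,y)$. A simplex over $\mathbf L$ is a closed ball $x+\pi^kB(c_0(\mathbf L,A'),0,1)$ ($\pi$ of maximal absolute value $<1$, $k\in\mathbb Z$) in a coordinate subspace $c_0(\mathbf L,A')$ of the Banach space $c_0(\mathbf L,A)$ (families in $\mathbf L$ tending to zero, sup norm). A polyhedron is a disjoint union of simplexes $s_i$, $i\in F$; it is uniform if $\sup_i\mathrm{diam}(s_i)<\infty$ and $\inf_{i\ne j}\mathrm{dist}(s_i,s_j)>0$. *)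

From HB Require Import structures.
From mathcomp Require Import all_boot all_order all_algebra.
From mathcomp Require Import all_classical reals.
Set Implicit Arguments. Unset Strict Implicit. Unset Printing Implicit Defensive.
Import Order.TTheory GRing.Theory Num.Theory.
Local Open Scope ring_scope.
Local Open Scope classical_set_scope.

Definition ultrametric (R : realType) (X : Type) (rho : X -> X -> R) : Prop :=
  [/\ (forall x y, 0 <= rho x y),
      (forall x y, rho x y = 0 <-> x = y),
      (forall x y, rho x y = rho y x) &
      (forall x y z, rho x z <= Num.max (rho x y) (rho y z))].

Definition cauchy_seq (R : realType) (X : Type) (rho : X -> X -> R)
  (u : nat -> X) : Prop :=
  forall eps : R, 0 < eps -> exists N, forall m n, (N <= m)%N -> (N <= n)%N ->
    rho (u m) (u n) < eps.

Definition seq_converges (R : realType) (X : Type) (rho : X -> X -> R)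
  (u : nat -> X) (l : X) : Prop :=
  forall eps : R, 0 < eps -> exists N, forall n, (N <= n)%N -> rho (u n) l < eps.

Definition complete_space (R : realType) (X : Type) (rho : X -> X -> R) : Prop :=
  forall u, cauchy_seq rho u -> exists l, seq_converges rho u l.

Definition is_completion (R : realType) (X Xt : Type) (rho : X -> X -> R)
  (rhot : Xt -> Xt -> R) (iota : X -> Xt) : Prop :=
  [/\ complete_space rhot,
      (forall x y, rhot (iota x) (iota y) = rho x y) &
      (forall y (eps : R), 0 < eps -> exists x, rhot y (iota x) < eps)].

Definition nonarch_abs (R : realType) (L : fieldType) (v : L -> R) : Prop :=
  [/\ (forall x, v x = 0 <-> x = 0),
      (forall x y, v (x * y) = v x * v y) &
      (forall x y, v (x + y) <= Num.max (v x) (v y))].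

(* the induced topology is non-discrete, i.e. the absolute value is nontrivial *)
Definition nondiscrete_abs (R : realType) (L : fieldType) (v : L -> R) : Prop :=
  exists x, 0 < v x /\ v x != 1.

(* locally compact: some closed ball B(0,r), r > 0, is compact
   (for the metric |x - y|, compactness = sequential compactness) *)
Definition locally_compact_abs (R : realType) (L : fieldType) (v : L -> R) : Prop :=
  exists r : R, 0 < r /\
    forall u : nat -> L, (forall n, v (u n) <= r) ->
      exists (phi : nat -> nat) (l : L),
        (forall n, (phi n < phi n.+1)%N) /\ v l <= r /\
        seq_converges (fun a b => v (a - b)) (u \o phi) l.

Definition uniformizer (R : realType) (L : fieldType) (v : L -> R) (pi : L) : Prop :=
  v pi < 1 /\ forall x, v x < 1 -> v x <= v pi.

Definition c0 (R : realType) (L : fieldType) (v : L -> R) (A : Type)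
  : set (A -> L) :=
  [set x | forall eps : R, 0 < eps -> finite_set [set a | eps < v (x a)]].

Definition c0_sub (R : realType) (L : fieldType) (v : L -> R) (A : Type)
  (A' : set A) : set (A -> L) :=
  [set x | c0 v x /\ forall a, ~ A' a -> x a = 0].

Definition c0_norm (R : realType) (L : fieldType) (v : L -> R) (A : Type)
  (x : A -> L) : R := sup [set v (x a) | a in [set: A]].

Definition simplex (R : realType) (L : fieldType) (v : L -> R) (A : Type)
  (S : set (A -> L)) : Prop :=
  exists (A' : set A) (x : A -> L) (pi : L) (k : int),
    [/\ c0_sub v A' x, uniformizer v pi &
        S = [set (fun a => x a + pi ^ k * z a) | z in
              [set z | c0_sub v A' z /\ c0_norm v z <= 1]]].

Definition polyhedron_of (R : realType) (L : fieldType) (v : L -> R) (A : Type)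
  (F : Type) (s : F -> set (A -> L)) (P : set (A -> L)) : Prop :=
  [/\ (forall i, simplex v (s i)),
      (forall i j, i <> j -> s i `&` s j = set0) &
      P = \bigcup_(i in [set: F]) s i].

Definition uniform_polyhedron (R : realType) (L : fieldType) (v : L -> R)
  (A : Type) (P : set (A -> L)) : Prop :=
  exists (F : Type) (s : F -> set (A -> L)),
    [/\ polyhedron_of v s P,
        (exists M : R, forall i x y, s i x -> s i y ->
            c0_norm v (fun a => x a - y a) <= M) &
        (exists delta : R, 0 < delta /\ forall i j x y, i <> j -> s i x -> s j y ->
            delta <= c0_norm v (fun a => x a - y a))].

Definition non_stretching (R : realType) (L : fieldType) (v : L -> R) (A T : Type)
  (d : T -> T -> R) (D : set T) (f : T -> A -> L) : Prop :=
  forall x y, D x -> D y -> c0_norm v (fun a => f x a - f y a) <= d x y.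

(* For y in the completion, call z a candidate value at y if z lies
   in P and |z - f e| <= rho(y, e) for every e in E.  Candidates exist: the
   balls B(f e, rho(y, e)) pairwise meet, so either some center f e0 lies in
   all of them, or their radii strictly decrease through values |t|, t in L;
   as the value group is discrete these radii shrink to 0, the centers form a
   Cauchy family (L is complete, being locally compact), and the limit stays
   in P because P is a union of closed simplexes at positive mutual distance.
   Let g y be chosen as a function of the set of candidates only.  If y is
   farther from every point of E than from y', then y and y' have the same
   distances to E, hence the same candidates and g y = g y'; otherwise both y
   and y' are within rho(y, y') of points of E and the ultrametric inequality
   gives |g y - g y'| <= rho(y, y'). *)

From HB Require Import structures.
From mathcomp Require Import all_boot all_order all_algebra.
From mathcomp Require Import all_classical reals.
From mathcomp Require Import lra finmap.
Set Implicit Arguments. Unset Strict Implicit. Unset Printing Implicit Defensive.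
Import Order.TTheory GRing.Theory Num.Theory.
Local Open Scope ring_scope.
Local Open Scope classical_set_scope.

Lemma bernoulli_ineq (R : realDomainType) (h : R) (n : nat) :
  0 <= h -> 1 + n%:R * h <= (1 + h) ^+ n.
Proof.
move=> h0; elim: n => [|n IH]; first by rewrite mul0r addr0 expr0.
have nh0 : 0 <= n%:R * h by rewrite mulr_ge0.
have := ler_wpM2l (addr_ge0 ler01 h0) IH.
rewrite exprS -natr1 mulrDl mul1r; nra.
Qed.

Lemma geometric_small (R : archiRealFieldType) (q c eps : R) :
  0 < q -> q < 1 -> 0 < eps -> exists n, q ^+ n * c < eps.
Proof.
move=> q0 q1 e0; have [c_le0|c_gt0] := leP c 0.
  by exists 0%N; rewrite expr0 mul1r (le_lt_trans c_le0).
pose h := q^-1 - 1; have h0 : 0 < h by rewrite subr_gt0 invf_gt1.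
have /archi_boundP : 0 <= c / (eps * h) by rewrite ltW ?divr_gt0 ?mulr_gt0.
set n := Num.bound _ => hn; exists n.
have qn0 : 0 < q ^+ n by rewrite exprn_gt0.
have h1 : 1 + h = q^-1 by rewrite addrCA subrr addr0.
have := bernoulli_ineq n (ltW h0); rewrite h1 exprVn.
rewrite -(ler_pM2l qn0) mulfV ?gt_eqF // => Hq.
rewrite ltr_pdivrMr ?mulr_gt0 // in hn.
have Hnh : q ^+ n * (n%:R * h) <= 1 by rewrite mulrDr mulr1 in Hq; lra.
apply: (lt_le_trans (y := q ^+ n * (n%:R * (eps * h)))); first by rewrite ltr_pM2l.
nra.
Qed.

Section AbsoluteValue.
Variables (R : realType) (L : fieldType) (v : L -> R).
Hypothesis vabs : nonarch_abs v.

Lemma absv_eq0 x : v x = 0 -> x = 0.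
Proof. by case: vabs => H _ _ /H. Qed.

Lemma absv0 : v 0 = 0.
Proof. by case: vabs => H _ _; apply/H. Qed.

Lemma absvM x y : v (x * y) = v x * v y.
Proof. by case: vabs. Qed.

Lemma absvD_le x y : v (x + y) <= Num.max (v x) (v y).
Proof. by case: vabs. Qed.

Lemma absv_neq0 x : x != 0 -> v x != 0.
Proof. by move=> x0; apply: contra_neq x0; apply: absv_eq0. Qed.

Lemma absv1 : v 1 = 1.
Proof.
have v10 : v 1 != 0 by rewrite absv_neq0 ?oner_eq0.
by apply: (mulfI v10); rewrite -absvM !mulr1.
Qed.

Lemma absvV x : x != 0 -> v x^-1 = (v x)^-1.
Proof.
move=> x0; apply: (mulfI (absv_neq0 x0)).
by rewrite -absvM !divff ?absv_neq0 ?absv1.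
Qed.

Lemma absvX x n : v (x ^+ n) = v x ^+ n.
Proof. by elim: n => [|n IH]; rewrite ?absv1 // !exprS absvM IH. Qed.

Lemma absvXz x (k : int) : x != 0 -> v (x ^ k) = v x ^ k.
Proof.
move=> x0; case: k => n; first by rewrite -!exprnP absvX.
by rewrite NegzE -!exprnN absvV ?expf_neq0 // absvX.
Qed.

(* [nonarch_abs] does not force v >= 0: v (-1) = -1 is allowed (v is then an
   absolute value times the sign of an ordering of L).  In that case every
   simplex is a point, see [simplex_signed_absv_zero]. *)
Lemma absvN1 : v (-1) = 1 \/ v (-1) = -1.
Proof.
have /eqP : v (-1) ^+ 2 = 1 by rewrite expr2 -absvM mulrNN mulr1 absv1.
by rewrite sqrf_eq1 => /orP[] /eqP; [left | right].
Qed.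

Hypothesis nd : nondiscrete_abs v.

Lemma uniformizer_gt0 p : uniformizer v p -> 0 < v p.
Proof.
case=> _ pmax; case: nd => x [x_gt0 x_neq1].
have x0 : x != 0 by apply: contraTneq x_gt0 => ->; rewrite absv0 ltxx.
case: (ltgtP (v x) 1) => [x_lt1|x_gt1|x_eq1]; last by rewrite x_eq1 eqxx in x_neq1.
  exact: lt_le_trans x_gt0 (pmax _ x_lt1).
have xV_lt1 : v x^-1 < 1 by rewrite absvV // invf_lt1.
by apply: lt_le_trans (pmax _ xV_lt1); rewrite absvV // invr_gt0.
Qed.

Lemma uniformizer_neq0 p : uniformizer v p -> p != 0.
Proof. by move/uniformizer_gt0; apply: contraTneq => ->; rewrite absv0 ltxx. Qed.

Lemma absv_unbounded p (M : R) : uniformizer v p -> exists y, M < v y.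
Proof.
move=> up; have [p1 p0] := (proj1 up, uniformizer_neq0 up).
have vp0 := uniformizer_gt0 up.
have [n hn] := geometric_small (Num.max M 1) vp0 p1 ltr01.
have vpn : 0 < v p ^+ n by rewrite exprn_gt0.
exists (p ^+ n)^-1; rewrite absvV ?expf_neq0 // absvX.
apply: (le_lt_trans (y := Num.max M 1)); first by rewrite le_max lexx.
by rewrite -(ltr_pM2l vpn) mulfV ?gt_eqF // mulrC.
Qed.

End AbsoluteValue.

Section C0Norm.
Variables (R : realType) (L : fieldType) (v : L -> R) (A : Type).

Lemma c0_norm_le (x : A -> L) r :
  0 <= r -> (forall a, v (x a) <= r) -> c0_norm v x <= r.
Proof.
move=> r0 xr; have [[t St]|S0] := pselect ([set v (x a) | a in [set: A]] !=set0).
  by apply: ge_sup; [exists t | move=> _ [a _ <-]].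
rewrite /c0_norm (_ : [set _ | _ in _] = set0) ?sup0 //.
by apply/seteqP; split=> // t St; apply: S0; exists t.
Qed.

Lemma c0_norm_ge (x : A -> L) a :
  (exists M, forall b, v (x b) <= M) -> v (x a) <= c0_norm v x.
Proof.
by case=> M xM; apply: ub_le_sup; [exists M => _ [b _ <-] | exists a].
Qed.

Lemma c0_bounded (x : A -> L) : c0 v x -> exists M, forall a, v (x a) <= M.
Proof.
move=> /(_ 1 ltr01) /(finite_image (fun a => v (x a))) /finite_fsetP[X XE].
exists (\big[Num.max/1]_(t <- enum_fset X) t) => a.
have [xa_le1|xa_gt1] := leP (v (x a)) 1.
  exact: le_trans xa_le1 (bigmax_ge_id _ _ _ _).
have : [set` X] (v (x a)) by rewrite -XE; exists a.
by move=> /= Xxa; apply: le_bigmax_seq.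
Qed.

End C0Norm.

Lemma simplex_signed_absv_zero (R : realType) (L : fieldType) (v : L -> R)
    (A : Type) (S : set (A -> L)) (M : R) :
  nonarch_abs v -> nondiscrete_abs v -> v (-1) = -1 -> simplex v S ->
  (forall x y, S x -> S y -> c0_norm v (fun a => x a - y a) <= M) ->
  forall x, S x -> x = (fun _ => 0).
Proof.
move=> vabs nd vN1 [A' [x0 [p [k [[_ x0_out] up S_def]]]]] diamM.
suff A'0 : forall a, ~ A' a.
  move=> x; rewrite S_def => -[z [[_ z_out] _] <-]; apply: funext => a.
  by rewrite x0_out ?z_out ?mulr0 ?addr0.
move=> a0 A'a0.
have [y My] := absv_unbounded vabs nd (Num.max M 0) up.
have vy_gt0 : 0 < v y by apply: le_lt_trans My; rewrite le_max lexx orbT.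
have p0 := uniformizer_neq0 vabs nd up.
pose pk := p ^ k; have pk0 : pk != 0 by rewrite expfz_neq0.
have vpk : 0 < v pk.
  by rewrite (absvXz vabs) // exprz_gt0 // (uniformizer_gt0 vabs nd up).
have S_nonpos (z : A -> L) : (forall a, v (z a) <= 0) ->
    (forall a, ~ A' a -> z a = 0) -> S (fun a => x0 a + pk * z a).
  move=> z_le0 z_out; rewrite S_def; exists z => //; split; first split=> // eps e0.
    rewrite (_ : [set _ | _] = set0) //; apply/seteqP; split=> // a /=.
    by apply/negP; rewrite -leNgt (le_trans (z_le0 a) (ltW e0)).
  by apply: c0_norm_le => // a; apply: le_trans (z_le0 a) ler01.
(* As v (-1) = -1, the unit ball contains z although v (pk * z a0) = v y is large. *)
pose z a := if `[< a = a0 >] then - (pk^-1 * y) else 0.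
have S0 : S (fun a => x0 a + pk * 0).
  by apply: (S_nonpos (fun=> 0)) => // a; rewrite (absv0 vabs).
have Sz : S (fun a => x0 a + pk * z a).
  apply: S_nonpos => a; rewrite /z; case: asboolP => //.
  - rewrite -mulN1r !(absvM vabs) vN1 (absvV vabs) // mulN1r oppr_le0.
    by rewrite mulr_ge0 ?invr_ge0 ?ltW.
  - by rewrite (absv0 vabs).
  - by move=> ->.
have diffE a : x0 a + pk * 0 - (x0 a + pk * z a) = if `[< a = a0 >] then y else 0.
  rewrite /z; case: ifP => _; last by rewrite !mulr0 subrr.
  by rewrite mulr0 addr0 opprD addNKr mulrN opprK mulVKf.
have := diamM _ _ S0 Sz; rewrite (funext diffE); apply/negP; rewrite -ltNge.
have bnd : exists N, forall b, v (if `[< b = a0 >] then y else 0) <= N.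
  by exists (v y) => b; case: asboolP => _; rewrite ?(absv0 vabs) // ltW.
apply: lt_le_trans (c0_norm_ge a0 bnd); case: asboolP => // _.
by apply: le_lt_trans My; rewrite le_max lexx.
Qed.

Lemma ultrametric_isosceles (R : realType) (X : Type) (d : X -> X -> R) x y z :
  ultrametric d -> d x y < d x z -> d y z = d x z.
Proof.
case=> _ _ dC dmax xy_lt; apply/eqP; rewrite eq_le; apply/andP; split.
  by apply: le_trans (dmax y x z) _; rewrite ge_max lexx dC ltW.
by have := dmax x y z; rewrite le_max leNgt xy_lt.
Qed.

Section PositiveAbsoluteValue.
Variables (R : realType) (L : fieldType) (v : L -> R).
Hypotheses (vabs : nonarch_abs v) (vN1 : v (-1) = 1).

Lemma absvN x : v (- x) = v x.
Proof. by rewrite -mulN1r (absvM vabs) vN1 mul1r. Qed.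

Lemma absv_ge0 x : 0 <= v x.
Proof. by have := absvD_le vabs x (- x); rewrite subrr (absv0 vabs) absvN maxxx. Qed.

Lemma absv_gt0 x : x != 0 -> 0 < v x.
Proof. by move=> x0; rewrite lt_neqAle eq_sym (absv_neq0 vabs) ?absv_ge0. Qed.

Lemma absv_le0 x : v x <= 0 -> x = 0.
Proof.
by move=> vx_le0; apply: (absv_eq0 vabs); apply/eqP; rewrite eq_le vx_le0 absv_ge0.
Qed.

Lemma absv_distC x y : v (x - y) = v (y - x).
Proof. by rewrite -absvN opprB. Qed.

Lemma absv_dist_ultra x y z : v (x - z) <= Num.max (v (x - y)) (v (y - z)).
Proof. by have := absvD_le vabs (x - y) (y - z); rewrite addrA subrK. Qed.

Hypothesis nd : nondiscrete_abs v.
Variable p : L.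
Hypothesis up : uniformizer v p.

Lemma uniformizer_gap a b : v b < v a -> v b <= v p * v a.
Proof.
move=> ba; have a0 : a != 0.
  by apply: contraTneq ba => ->; rewrite (absv0 vabs) ltNge absv_ge0.
have va0 := absv_gt0 a0.
have : v (b / a) < 1 by rewrite (absvM vabs) (absvV vabs) // ltr_pdivrMr // mul1r.
by move/(proj2 up); rewrite (absvM vabs) (absvV vabs) // ler_pdivrMr.
Qed.

Hypothesis lc : locally_compact_abs v.

(* Scaled by a power of p, a tail of a Cauchy sequence lies in the compact ball;
   a convergent subsequence then makes the whole sequence converge. *)
Lemma absv_complete (u : nat -> L) :
  cauchy_seq (fun a b => v (a - b)) u ->
  exists l, seq_converges (fun a b => v (a - b)) u l.
Proof.
move=> u_cauchy; case: lc => r [r0 compact_ball].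
have [N1 hN1] := u_cauchy 1 ltr01.
pose B := Num.max 1 (v (u N1)).
have uB n : (N1 <= n)%N -> v (u n) <= B.
  move=> n_ge; have := absvD_le vabs (u n - u N1) (u N1); rewrite subrK.
  by move/le_trans; apply; rewrite ge_max !le_max lexx orbT andbT ltW ?hN1.
have vp0 : 0 < v p := uniformizer_gt0 vabs nd up.
have [k hk] := geometric_small B vp0 (proj1 up) r0.
pose c := p ^+ k; have c0 : c != 0 by rewrite expf_neq0 ?(uniformizer_neq0 vabs nd).
have vc0 : 0 < v c := absv_gt0 c0.
pose w n := c * u (N1 + n)%N.
have w_le n : v (w n) <= r.
  rewrite (absvM vabs) (absvX vabs) ltW // (le_lt_trans _ hk) // ler_pM2l ?exprn_gt0 //.
  by rewrite uB ?leq_addr.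
have [phi [l [phi_incr [_ w_phi_l]]]] := compact_ball w w_le.
have phi_ge n : (n <= phi n)%N.
  by elim: n => // n IH; apply: leq_ltn_trans IH (phi_incr n).
exists (c^-1 * l) => eps e0.
have [N2 hN2] := u_cauchy eps e0.
have [N3 hN3] := w_phi_l (eps * v c) (mulr_gt0 e0 vc0).
pose m := (N1 + phi (maxn N2 N3))%N.
have m_ge : (N2 <= m)%N.
  by rewrite (leq_trans (leq_maxl N2 N3)) // (leq_trans (phi_ge _)) ?leq_addl.
have um_l : v (u m - c^-1 * l) < eps.
  have -> : u m - c^-1 * l = c^-1 * (w (phi (maxn N2 N3)) - l).
    by rewrite mulrBr mulKf.
  rewrite (absvM vabs) (absvV vabs) // mulrC ltr_pdivrMr //.
  by apply: hN3; rewrite leq_maxr.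
exists N2 => n n_ge; apply: le_lt_trans (absv_dist_ultra _ (u m) _) _.
by rewrite gt_max um_l andbT hN2.
Qed.

Lemma radii_inf0 (X : Type) (E : set X) (h : X -> R) :
  E !=set0 -> (forall e0, E e0 -> exists e t, [/\ E e, h e < v t & v t <= h e0]) ->
  forall eps, 0 < eps -> exists2 e, E e & h e < eps.
Proof.
move=> [e1 Ee1] descend.
have /choice[next next_spec] : forall e0, exists et : X * L,
    E e0 -> [/\ E et.1, h et.1 < v et.2 & v et.2 <= h e0].
  move=> e0; have [/descend[e [t et]]|nEe0] := pselect (E e0); first by exists (e, t).
  by exists (e0, 0) => /nEe0.
pose en n := iter n (fun e => (next e).1) e1.
have E_en n : E (en n) by elim: n => //= n IH; case: (next_spec _ IH).
pose t n := (next (en n)).2.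
have t_spec n : h (en n.+1) < v (t n) /\ v (t n) <= h (en n).
  by case: (next_spec _ (E_en n)).
have vp0 := uniformizer_gt0 vabs nd up.
have t_geom n : v (t n) <= v p ^+ n * v (t 0).
  elim: n => [|n IH]; first by rewrite mul1r.
  have [t1 _] := t_spec n; have [_ t2] := t_spec n.+1.
  apply: le_trans (uniformizer_gap (le_lt_trans t2 t1)) _.
  by rewrite exprS -mulrA ler_pM2l.
move=> eps e0; have [n hn] := geometric_small (v (t 0)) vp0 (proj1 up) e0.
exists (en n.+1) => //.
exact: lt_le_trans (proj1 (t_spec n)) (le_trans (t_geom n) (ltW hn)).
Qed.

Variable A : Type.

Definition dist_le (z w : A -> L) (r : R) := forall a, v (z a - w a) <= r.

Lemma limit_center (X : Type) (E : set X) (c : X -> A -> L) (h : X -> R) :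
  (forall e, E e -> 0 <= h e) ->
  (forall e e', E e -> E e' -> dist_le (c e) (c e') (Num.max (h e) (h e'))) ->
  (forall eps, 0 < eps -> exists2 e, E e & h e < eps) ->
  exists z, forall e, E e -> dist_le z (c e) (h e).
Proof.
move=> h_ge0 c_compat h_inf0; have vp0 := uniformizer_gt0 vabs nd up.
have /choice[en en_spec] : forall n, exists e, E e /\ h e < v p ^+ n.
  by move=> n; have [e] := h_inf0 _ (exprn_gt0 n vp0); exists e.
have h_tail eps : 0 < eps -> exists N, forall n, (N <= n)%N -> h (en n) < eps.
  move=> e0; have [N hN] := geometric_small 1 vp0 (proj1 up) e0.
  exists N => n n_ge; apply: lt_le_trans (proj2 (en_spec n)) _.
  rewrite mulr1 in hN; apply: le_trans (ltW hN).
  by rewrite ler_wiXn2l // ?ltW // (proj1 up).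
have /choice[z z_lim] : forall a, exists l,
    seq_converges (fun x y => v (x - y)) (fun n => c (en n) a) l.
  move=> a; apply: absv_complete => eps e0; have [N hN] := h_tail eps e0.
  exists N => m n m_ge n_ge.
  apply: le_lt_trans (c_compat _ _ (proj1 (en_spec m)) (proj1 (en_spec n)) a) _.
  by rewrite gt_max !hN.
exists z => e Ee a; rewrite leNgt; apply/negP => V_gt.
set V := v (z a - c e a) in V_gt; have V0 : 0 < V := le_lt_trans (h_ge0 e Ee) V_gt.
have [N1 hN1] := z_lim a V V0; have [N2 hN2] := h_tail V V0.
pose n := maxn N1 N2.
have zn : v (z a - c (en n) a) < V by rewrite absv_distC hN1 ?leq_maxl.
have ne : v (c (en n) a - c e a) < V.
  apply: le_lt_trans (c_compat _ _ (proj1 (en_spec n)) Ee a) _.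
  by rewrite gt_max V_gt hN2 ?leq_maxr.
by have := absv_dist_ultra (z a) (c (en n) a) (c e a); rewrite leNgt gt_max zn ne.
Qed.

Lemma simplex_bounded (S : set (A -> L)) x : simplex v S -> S x ->
  exists M, forall a, v (x a) <= M.
Proof.
move=> [A' [x0 [q [k [[x0_c0 _] _ ->]]]]] [w [[w_c0 _] _] <-].
have [M0 hM0] := c0_bounded x0_c0; have [M1 hM1] := c0_bounded w_c0.
exists (Num.max M0 (v (q ^ k) * M1)) => a.
apply: le_trans (absvD_le vabs _ _) _; rewrite (absvM vabs).
by rewrite le_max2 ?hM0 // ler_wpM2l ?absv_ge0.
Qed.

Lemma simplex_closed (S : set (A -> L)) z : simplex v S ->
  (forall eps, 0 < eps -> exists2 x, S x & dist_le z x eps) -> S z.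
Proof.
move=> [A' [x0 [q [k [[_ x0_out] uq ->]]]]] z_adh.
pose qk := q ^ k; have qk0 : qk != 0 by rewrite expfz_neq0 ?(uniformizer_neq0 vabs nd).
have vqk0 : 0 < v qk := absv_gt0 qk0.
have z_near eps : 0 < eps -> exists2 w, c0_sub v A' w /\ c0_norm v w <= 1 &
    dist_le z (fun a => x0 a + qk * w a) eps.
  by move=> /z_adh[_ [w w_ball <-] zw]; exists w.
pose W a := qk^-1 * (z a - x0 a).
have W_near w a : W a - w a = qk^-1 * (z a - (x0 a + qk * w a)).
  by rewrite opprD addrA mulrBr mulKf.
exists W; last by apply: funext => a; rewrite mulVKf // addrC subrK.
have W_le1 a : v (W a) <= 1.
  have [w [[w_c0 _] w_le1] zw] := z_near _ vqk0.
  have wa_le1 : v (w a) <= 1 by apply: le_trans w_le1; apply/c0_norm_ge/c0_bounded.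
  have := absvD_le vabs (W a - w a) (w a); rewrite subrK => /le_trans; apply.
  rewrite W_near (absvM vabs) (absvV vabs) // ge_max wa_le1 andbT.
  by rewrite mulrC ler_pdivrMr // mul1r.
have W_out a : ~ A' a -> W a = 0.
  move=> A'na; rewrite /W; suff -> : z a = x0 a by rewrite subrr mulr0.
  apply/eqP; rewrite -subr_eq0; apply/eqP/absv_le0/ler_addgt0Pr => eps e0.
  have [w [[_ w_out] _] zw] := z_near _ e0.
  by rewrite add0r; have := zw a; rewrite w_out // mulr0 addr0.
have W_c0 : c0 v W.
  move=> eps e0; have [w [[w_c0 _] _] zw] := z_near _ (mulr_gt0 e0 vqk0).
  apply: sub_finite_set (w_c0 _ e0) => a /=; apply: contraTT; rewrite -!leNgt => wa_le.
  have := absvD_le vabs (W a - w a) (w a); rewrite subrK => /le_trans; apply.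
  rewrite W_near (absvM vabs) (absvV vabs) // ge_max wa_le andbT.
  by rewrite mulrC ler_pdivrMr.
by split; [split | apply: c0_norm_le].
Qed.

Section Polyhedron.
Variables (F : Type) (s : F -> set (A -> L)) (P : set (A -> L)) (delta : R).
Hypotheses (s_simplex : forall i, simplex v (s i))
  (P_cover : P = \bigcup_(i in [set: F]) s i) (delta_gt0 : 0 < delta)
  (s_sep : forall i j x y, i <> j -> s i x -> s j y ->
     delta <= c0_norm v (fun a => x a - y a)).

(* Boundedness matters: [c0_norm] is a [sup], which is 0 on unbounded sets. *)
Lemma polyhedron_dist_le x y r : P x -> P y ->
  c0_norm v (fun a => x a - y a) <= r -> dist_le x y r.
Proof.
rewrite P_cover => -[i _ /(simplex_bounded (s_simplex i))[Mx hMx]].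
move=> -[j _ /(simplex_bounded (s_simplex j))[My hMy]] xy_le a.
apply: le_trans xy_le; apply: c0_norm_ge; exists (Num.max Mx My) => b.
by apply: le_trans (absvD_le vabs _ _) _; rewrite absvN le_max2.
Qed.

Lemma polyhedron_closed z :
  (forall eps, 0 < eps -> exists2 x, P x & dist_le z x eps) -> P z.
Proof.
move=> z_adh; have d2 : 0 < delta / 2 by rewrite divr_gt0.
have [x1] := z_adh _ d2; rewrite P_cover => -[i _ x1_si] zx1.
exists i => //; apply: (simplex_closed (s_simplex i)) => eps e0.
have [x] : exists2 x, P x & dist_le z x (Num.min eps (delta / 2)).
  by apply: z_adh; rewrite lt_min e0 d2.
rewrite P_cover => -[j _ x_sj] zx.
exists x => [|a]; last by apply: le_trans (zx a) _; rewrite ge_min lexx.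
have [<- //|ji] := pselect (j = i).
have : c0_norm v (fun a => x a - x1 a) <= delta / 2.
  apply: c0_norm_le => [|a]; first exact: ltW.
  apply: le_trans (absv_dist_ultra _ (z a) _) _.
  by rewrite ge_max absv_distC zx1 (le_trans (zx a)) // ge_min lexx orbT.
by have := s_sep ji x_sj x1_si; lra.
Qed.

Lemma polyhedron_balls_meet (X : Type) (E : set X) (c : X -> A -> L) (h : X -> R) :
  E !=set0 -> (forall e, E e -> P (c e)) -> (forall e, E e -> 0 <= h e) ->
  (forall e e', E e -> E e' -> dist_le (c e) (c e') (Num.max (h e) (h e'))) ->
  exists2 z, P z & forall e, E e -> dist_le z (c e) (h e).
Proof.
move=> E0 cP h_ge0 c_compat.
have [[e0 Ee0 e0_center]|no_center] :=
  pselect (exists2 e0, E e0 & forall e, E e -> dist_le (c e0) (c e) (h e)).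
  by exists (c e0); [apply: cP|].
have descend e0 : E e0 -> exists e t, [/\ E e, h e < v t & v t <= h e0].
  move=> Ee0; have /existsPNP[e Ee /existsNP[a]] :
      ~ forall e, E e -> dist_le (c e0) (c e) (h e).
    by move=> e0_center; apply: no_center; exists e0.
  move=> /negP; rewrite -ltNge => he_lt; exists e, (c e0 a - c e a); split=> //.
  by have := c_compat _ _ Ee0 Ee a; rewrite le_max [_ <= h e]leNgt he_lt orbF.
have h_inf0 := radii_inf0 E0 descend.
have [z z_center] := limit_center h_ge0 c_compat h_inf0.
exists z => //; apply: polyhedron_closed => eps e0.
have [e Ee he] := h_inf0 eps e0.
by exists (c e) => [|a]; [apply: cP | apply: le_trans (z_center e Ee a) (ltW he)].
Qed.

Section Extension.
Variables (X Xt : Type) (rho : X -> X -> R) (rhot : Xt -> Xt -> R) (iota : X -> Xt).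
Variables (E : set X) (f : X -> A -> L).
Hypotheses (rhot_ultra : ultrametric rhot)
  (iota_isometry : forall x y, rhot (iota x) (iota y) = rho x y)
  (P_neq0 : P !=set0) (fE_P : forall e, E e -> P (f e))
  (f_non_stretching : non_stretching v rho E f).

Definition candidates (y : Xt) : set (A -> L) :=
  [set z | P z /\ forall e, E e -> dist_le z (f e) (rhot y (iota e))].

Lemma candidates_neq0 y : candidates y !=set0.
Proof.
have [rhot_ge0 _ rhotC rhot_max] := rhot_ultra.
have [E0|E_empty] := pselect (E !=set0); last first.
  by have [z Pz] := P_neq0; exists z; split=> // e Ee; case: E_empty; exists e.
have [|z Pz z_center] := polyhedron_balls_meet (h := fun e => rhot y (iota e)) E0 fE_P
  (fun e _ => rhot_ge0 _ _).
  move=> e e' Ee Ee'; apply: polyhedron_dist_le; [exact: fE_P | exact: fE_P |].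
  apply: le_trans (f_non_stretching Ee Ee') _; rewrite -iota_isometry.
  by apply: le_trans (rhot_max _ y _) _; rewrite rhotC.
by exists z.
Qed.

Lemma candidates_eq_or_near y y' :
  candidates y' = candidates y \/ exists2 e, E e & rhot y (iota e) <= rhot y y'.
Proof.
have [far|] := pselect (forall e, E e -> rhot y y' < rhot y (iota e)); last first.
  by move=> /existsPNP[e Ee /negP]; rewrite -leNgt; right; exists e.
left; apply/seteqP; split=> z [Pz z_near]; split=> // e Ee.
  by rewrite -(ultrametric_isosceles rhot_ultra (far e Ee)); apply: z_near.
by rewrite (ultrametric_isosceles rhot_ultra (far e Ee)); apply: z_near.
Qed.

Lemma non_stretching_extension : exists g : Xt -> A -> L,
  [/\ (forall y, P (g y)), (forall e, E e -> g (iota e) = f e) &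
      non_stretching v rhot [set: Xt] g].
Proof.
have [rhot_ge0 rhot_eq0 rhotC rhot_max] := rhot_ultra.
have /choice[sel selP] : forall S : set (A -> L), exists z, S !=set0 -> S z.
  by move=> S; have [[z Sz]|S0] := pselect (S !=set0); [exists z | exists 0 => /S0].
(* [sel] is a choice function on sets: g y depends on y only through
   [candidates y], which is locally constant away from E. *)
pose g y := sel (candidates y).
have g_cand y : candidates y (g y) := selP _ (candidates_neq0 y).
exists g; split.
- by move=> y; case: (g_cand y).
- move=> e Ee; apply: funext => a; apply/eqP; rewrite -subr_eq0; apply/eqP/absv_le0.
  by have [_ /(_ e Ee a)] := g_cand (iota e); rewrite (proj2 (rhot_eq0 _ _) erefl).
move=> y y' _ _; apply: c0_norm_le => [|a]; first exact: rhot_ge0.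
have [eq_y|[e Ee ey]] := candidates_eq_or_near y y'.
  by rewrite /g eq_y subrr (absv0 vabs).
have [eq_y'|[e' Ee' ey']] := candidates_eq_or_near y' y.
  by rewrite /g eq_y' subrr (absv0 vabs).
rewrite [rhot y' y]rhotC in ey'.
have [[_ gy_near] [_ gy'_near]] := (g_cand y, g_cand y').
have ee' : v (f e a - f e' a) <= rhot y y'.
  have := polyhedron_dist_le (fE_P Ee) (fE_P Ee') (f_non_stretching Ee Ee') a.
  move/le_trans; apply.
  rewrite -iota_isometry; apply: le_trans (rhot_max _ y _) _.
  rewrite ge_max rhotC ey; apply: le_trans (rhot_max _ y' _) _.
  by rewrite ge_max lexx ey'.
apply: le_trans (absv_dist_ultra _ (f e a) _) _.
rewrite ge_max (le_trans (gy_near e Ee a)) //.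
apply: le_trans (absv_dist_ultra _ (f e' a) _) _.
by rewrite ge_max ee' absv_distC (le_trans (gy'_near e' Ee' a)).
Qed.

End Extension.
End Polyhedron.
End PositiveAbsoluteValue.

Theorem lemma2p14 (R : realType) (L : fieldType) (v : L -> R)
  (X : Type) (rho : X -> X -> R) (Xt : Type) (rhot : Xt -> Xt -> R)
  (iota : X -> Xt) (E : set X) (A : Type) (P : set (A -> L))
  (f : X -> A -> L) :
  nonarch_abs v -> nondiscrete_abs v -> locally_compact_abs v ->
  ultrametric rho -> ultrametric rhot -> is_completion rho rhot iota ->
  uniform_polyhedron v P -> P !=set0 ->
  (forall e, E e -> P (f e)) -> non_stretching v rho E f ->
  exists g : Xt -> A -> L,
    [/\ (forall y, P (g y)),
        (forall e, E e -> g (iota e) = f e) &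
        non_stretching v rhot [set: Xt] g].
Proof.
move=> vabs nd lc _ rhot_ultra [_ iota_isometry _].
move=> [F [s [[s_simplex _ P_cover] [M diamM] [delta [delta_gt0 s_sep]]]]].
move=> P_neq0 fE_P f_ns.
have [vN1|vN1] := absvN1 vabs.
  have [p up] : exists p, uniformizer v p.
    have [x] := P_neq0; rewrite P_cover => -[i _ _].
    by have [_ [_ [p [_ [_ up _]]]]] := s_simplex i; exists p.
  exact: (non_stretching_extension vabs vN1 nd up lc s_simplex P_cover delta_gt0 s_sep
    rhot_ultra iota_isometry P_neq0 fE_P f_ns).
have P0 x : P x -> x = (fun _ => 0).
  rewrite P_cover => -[i _].
  exact: simplex_signed_absv_zero vabs nd vN1 (s_simplex i) (diamM i) x.
have [rhot_ge0 _ _ _] := rhot_ultra.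
exists (fun _ _ => 0); split.
- by move=> _; have [x Px] := P_neq0; rewrite -(P0 _ Px).
- by move=> e Ee; rewrite (P0 _ (fE_P e Ee)).
- move=> y y' _ _; apply: c0_norm_le => [|a]; first exact: rhot_ge0.
  by rewrite subrr (absv0 vabs).
Qed.
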